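(* Let $p\ge1$ and $z$ be integers with $1\le z\le 2p-1$, $Z=\{-z+1,\dots,2p-z\}$, $Z'=\{-z,\dots,2p-z\}$. Let $h$ be an entropy conservative, symmetric, consistent and smooth two-point flux with entropy flux $H$, and let $A=(A_{lm})_{l,m\in Z}$, $B=(B_{lm})_{l,m\in Z'}$ be real matrices inducing an entropy conservative flux combination, i.e. with $\tilde A_{lm}:=A_{l+1,m+1}$ if $l+1,m+1\in Z$ and $\tilde A_{lm}:=0$ otherwise ($l,m\in Z'$), and $v_m:=(B_{0m}-\tilde A_{0m})+(B_{m0}-\tilde A_{m0})$: $\sum_{l,m\in Z'}\tilde A_{lm}=\sum_{l,m\in Z'}B_{lm}=1$, $\tilde A_{lm}=B_{lm}$ for $l,m\in Z'\setminus\{0\}$, $A_{ll}=0$ for $l\in Z$, and $v_0=0$. Let $g$ be an entropy dissipative two-point flux with entropy flux $G$, let $\alpha\in[0,1]$, and assume $A_{01}\ge0$, $A_{10}\ge0$, $B_{01}\ge0$, $B_{10}\ge0$. Define the families $$\varphi_{lm}(a,b)=\begin{cases}\alpha g(a,b)+(1-\alpha)h(a,b),&(l,m)=(0,1),\\ \alpha g(b,a)+(1-\alpha)h(a,b),&(l,m)=(1,0),\\ h(a,b),&\text{otherwise},\end{cases}\qquad \Phi_{lm}(a,b)=\begin{cases}\alpha G(a,b)+(1-\alpha)H(a,b),&(l,m)=(0,1),\\ \alpha G(b,a)+(1-\alpha)H(a,b),&(l,m)=(1,0),\\ H(a,b),&\text{otherwise},\end{cases}$$ and the general linear combined fluxes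 $$f_{k-\frac12}=\sum_{l,m\in Z}A_{lm}\varphi_{lm}(u_{k-1+l},u_{k-1+m}),\qquad f_{k+\frac12}=\sum_{l,m\in Z'}B_{lm}\varphi_{lm}(u_{k+l},u_{k+m}),$$ with $F_{k\pm\frac12}$ defined identically with $\Phi_{lm}$ in place of $\varphi_{lm}$. Then the resulting flux is entropy dissipative with numerical entropy flux $F$: for all states, $v(u_k)\cdot(f_{k-\frac12}-f_{k+\frac12})\le F_{k-\frac12}-F_{k+\frac12}$, so that along solutions of $\frac{\mathrm{d}u_k}{\mathrm{d}t}=\frac1{\Delta x}(f_{k-\frac12}-f_{k+\frac12})$ one has $\frac{\mathrm{d}}{\mathrm{d}t}U(u_k)\le\frac1{\Delta x}(F_{k-\frac12}-F_{k+\frac12})$.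
   Context: Conservation law $\partial_t u+\partial_x f(u)=0$, $u\in\mathbb{R}^N$, with smooth strictly convex entropy $U$, entropy flux $F$, entropy variable $v(u)=\nabla U(u)$, potential $\psi(u)=v(u)\cdot f(u)-F(u)$. A two-point flux $h$ is symmetric if $h(a,b)=h(b,a)$, consistent if $h(a,a)=f(a)$, entropy conservative if $(v(b)-v(a))\cdot h(a,b)=\psi(b)-\psi(a)$ for all $a,b$, with entropy flux $H(a,b)=\tfrac12(v(a)+v(b))\cdot h(a,b)-\tfrac12(\psi(a)+\psi(b))$. A two-point flux $g$ is entropy dissipative if $(v(b)-v(a))\cdot g(a,b)-(\psi(b)-\psi(a))\le0$ for all $a,b$, with entropy flux $G(a,b)=\tfrac12(v(a)+v(b))\cdot g(a,b)-\tfrac12(\psi(a)+\psi(b))$. Uniform mesh width $\Delta x$. *)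

From HB Require Import structures.
From mathcomp Require Import all_boot all_order all_algebra.
From mathcomp Require Import all_classical all_reals all_analysis.
Set Implicit Arguments. Unset Strict Implicit. Unset Printing Implicit Defensive.
Import Order.TTheory GRing.Theory Num.Theory.
Import numFieldNormedType.Exports.
Local Open Scope ring_scope.

Section Defs.
Variables (R : realType) (N : nat).
Notation state := 'rV[R]_N.

Definition dot (a b : state) : R := \sum_(i < N) a ord0 i * b ord0 i.

Definition Zset (p z : nat) : seq int :=
  [seq (i%:Z - z%:Z + 1) | i <- iota 0 (2 * p)].
Definition Zpset (p z : nat) : seq int :=
  [seq (i%:Z - z%:Z) | i <- iota 0 (2 * p).+1].

Definition strictly_convex (U : state -> R) :=
  forall (a b : state) (t : R), a != b -> 0 < t < 1 ->
    U (t *: a + (1 - t) *: b) < t * U a + (1 - t) * U b.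

Definition potential (v f : state -> state) (F : state -> R) (u : state) : R :=
  dot (v u) (f u) - F u.

Definition symmetric_flux (h : state -> state -> state) :=
  forall a b, h a b = h b a.
Definition consistent_flux (f : state -> state) (h : state -> state -> state) :=
  forall a, h a a = f a.
Definition entropy_conservative (v : state -> state) (psi : state -> R)
  (h : state -> state -> state) :=
  forall a b, dot (v b - v a) (h a b) = psi b - psi a.
Definition entropy_dissipative (v : state -> state) (psi : state -> R)
  (g : state -> state -> state) :=
  forall a b, dot (v b - v a) (g a b) - (psi b - psi a) <= 0.
Definition two_point_entropy_flux (v : state -> state) (psi : state -> R)
  (h : state -> state -> state) (a b : state) : R :=
  2^-1 * dot (v a + v b) (h a b) - 2^-1 * (psi a + psi b).

Definition Atilde (p z : nat) (A : int -> int -> R) (l m : int) : R :=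
  if (l + 1 \in Zset p z) && (m + 1 \in Zset p z) then A (l + 1) (m + 1) else 0.

Definition vcoef (p z : nat) (A B : int -> int -> R) (m : int) : R :=
  (B 0 m - Atilde p z A 0 m) + (B m 0 - Atilde p z A m 0).

Definition phi_fam (alpha : R) (g h : state -> state -> state) (l m : int)
  (a b : state) : state :=
  if (l == 0) && (m == 1) then alpha *: g a b + (1 - alpha) *: h a b
  else if (l == 1) && (m == 0) then alpha *: g b a + (1 - alpha) *: h a b
  else h a b.
Definition Phi_fam (alpha : R) (G H : state -> state -> R) (l m : int)
  (a b : state) : R :=
  if (l == 0) && (m == 1) then alpha * G a b + (1 - alpha) * H a b
  else if (l == 1) && (m == 0) then alpha * G b a + (1 - alpha) * H a b
  else H a b.

Definition flux_minus (p z : nat) (A : int -> int -> R)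
  (phi : int -> int -> state -> state -> state) (u : int -> state) (k : int) : state :=
  \sum_(l <- Zset p z) \sum_(m <- Zset p z) A l m *: phi l m (u (k - 1 + l)) (u (k - 1 + m)).
Definition flux_plus (p z : nat) (B : int -> int -> R)
  (phi : int -> int -> state -> state -> state) (u : int -> state) (k : int) : state :=
  \sum_(l <- Zpset p z) \sum_(m <- Zpset p z) B l m *: phi l m (u (k + l)) (u (k + m)).
Definition eflux_minus (p z : nat) (A : int -> int -> R)
  (Phi : int -> int -> state -> state -> R) (u : int -> state) (k : int) : R :=
  \sum_(l <- Zset p z) \sum_(m <- Zset p z) A l m * Phi l m (u (k - 1 + l)) (u (k - 1 + m)).
Definition eflux_plus (p z : nat) (B : int -> int -> R)
  (Phi : int -> int -> state -> state -> R) (u : int -> state) (k : int) : R :=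
  \sum_(l <- Zpset p z) \sum_(m <- Zpset p z) B l m * Phi l m (u (k + l)) (u (k + m)).

End Defs.

From HB Require Import structures.
From mathcomp Require Import all_boot all_order all_algebra.
From mathcomp Require Import all_classical all_reals all_analysis.
From mathcomp Require Import zify ring lra.
Set Implicit Arguments. Unset Strict Implicit. Unset Printing Implicit Defensive.
Import Order.TTheory GRing.Theory Num.Theory.
Import numFieldNormedType.Exports.
Local Open Scope ring_scope.

(** For an entropy conservative flux [h], the identity
    [(v b - v a) . h(a, b) = psi b - psi a] says exactly that
    [v a . h(a, b) - H(a, b) = psi a] and [v b . h(a, b) - H(a, b) = psi b];
    for a dissipative [g] these become [>=] and [<=] respectively.  Hence in
    [v(u_k) . (f_{k-1/2} - f_{k+1/2}) - (F_{k-1/2} - F_{k+1/2})] every term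
    in which [u_k] is an argument contributes [psi(u_k)] times its weight,
    up to a sign-controlled error from the [g]-parts in the positions
    [(0,1)] and [(1,0)]; the remaining terms cancel because [A~] and [B]
    agree off row and column 0, and the [psi(u_k)] contributions cancel
    because [A~] and [B] have the same total mass.  The semi-discrete
    entropy inequality is then the chain rule [d/dt U(u_k) = v(u_k) . du_k/dt]. *)

Section Dot.
Variables (R : realType) (N : nat).
Implicit Types a b x : 'rV[R]_N.

Lemma dotC a b : dot a b = dot b a.
Proof. by apply: eq_bigr => i _; rewrite mulrC. Qed.

Lemma dot_is_linear x : linear (dot x).
Proof.
move=> c a b; rewrite /dot scaler_sumr -big_split /=.
by apply: eq_bigr => i _; rewrite !mxE mulrDr mulrCA.
Qed.

HB.instance Definition _ x :=
  GRing.isLinear.Build R 'rV[R]_N R *%R (dot x) (dot_is_linear x).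

Lemma dotDl x a b : dot (a + b) x = dot a x + dot b x.
Proof. by rewrite dotC linearD /= !(dotC x). Qed.

Lemma dotBl x a b : dot (a - b) x = dot a x - dot b x.
Proof. by rewrite dotC linearB /= !(dotC x). Qed.

Lemma dot_double_sum_sub (I : Type) (s : seq I) x (w y : I -> I -> R)
    (X : I -> I -> 'rV[R]_N) :
  dot x (\sum_(l <- s) \sum_(m <- s) w l m *: X l m)
    - \sum_(l <- s) \sum_(m <- s) w l m * y l m
  = \sum_(l <- s) \sum_(m <- s) w l m * (dot x (X l m) - y l m).
Proof.
rewrite linear_sum -sumrB; apply: eq_bigr => l _.
by rewrite linear_sum -sumrB; apply: eq_bigr => m _; rewrite linearZ mulrBr.
Qed.

End Dot.

Section TwoPointEntropyFlux.
Variables (R : realType) (N : nat).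
Variables (v : 'rV[R]_N -> 'rV[R]_N) (psi : 'rV[R]_N -> R).
Implicit Types (a b : 'rV[R]_N) (g h : 'rV[R]_N -> 'rV[R]_N -> 'rV[R]_N).

Local Notation flux_residual h a b c :=
  (dot (v c) (h a b) - two_point_entropy_flux v psi h a b).

Lemma entropy_conservative_residual_left h :
  entropy_conservative v psi h -> forall a b, flux_residual h a b a = psi a.
Proof.
by move=> hec a b; have := hec a b; rewrite /two_point_entropy_flux dotBl dotDl; lra.
Qed.

Lemma entropy_conservative_residual_right h :
  entropy_conservative v psi h -> forall a b, flux_residual h a b b = psi b.
Proof.
by move=> hec a b; have := hec a b; rewrite /two_point_entropy_flux dotBl dotDl; lra.
Qed.

Lemma entropy_dissipative_residual_left g :
  entropy_dissipative v psi g -> forall a b, psi a <= flux_residual g a b a.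
Proof.
by move=> hed a b; have := hed a b; rewrite /two_point_entropy_flux dotBl dotDl; lra.
Qed.

Lemma entropy_dissipative_residual_right g :
  entropy_dissipative v psi g -> forall a b, flux_residual g a b b <= psi b.
Proof.
by move=> hed a b; have := hed a b; rewrite /two_point_entropy_flux dotBl dotDl; lra.
Qed.

End TwoPointEntropyFlux.

Lemma double_sum_le_of_termwise (R : realDomainType) (I : eqType) (s : seq I)
    (wA wB xA xB : I -> I -> R) (y : R) :
  \sum_(l <- s) \sum_(m <- s) wA l m = \sum_(l <- s) \sum_(m <- s) wB l m ->
  (forall l m, l \in s -> m \in s ->
     wA l m * (xA l m - y) <= wB l m * (xB l m - y)) ->
  \sum_(l <- s) \sum_(m <- s) wA l m * xA l m
    <= \sum_(l <- s) \sum_(m <- s) wB l m * xB l m.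
Proof.
move=> same_mass termwise.
have centered w x : \sum_(l <- s) \sum_(m <- s) w l m * (x l m - y)
    = \sum_(l <- s) \sum_(m <- s) w l m * x l m
      - (\sum_(l <- s) \sum_(m <- s) w l m) * y.
  rewrite mulr_suml -sumrB; apply: eq_bigr => l _.
  by rewrite mulr_suml -sumrB; apply: eq_bigr => m _; rewrite mulrBr.
have : \sum_(l <- s) \sum_(m <- s) wA l m * (xA l m - y)
    <= \sum_(l <- s) \sum_(m <- s) wB l m * (xB l m - y).
  rewrite big_seq [leRHS]big_seq; apply: ler_sum => l ls.
  by rewrite big_seq [leRHS]big_seq; apply: ler_sum => m ms; apply: termwise.
by rewrite !centered same_mass lerD2r.
Qed.

Section ShiftedMatrix.
Variables (R : realType) (p z : nat) (A : int -> int -> R).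

Lemma Atilde_ge0 l m : 0 <= A (l + 1) (m + 1) -> 0 <= Atilde p z A l m.
Proof. by rewrite /Atilde; case: ifP. Qed.

(* [Z] is [Z' + 1] without the image of the last point [2p - z] of [Z'],
   on which [A~] vanishes. *)
Lemma sum_Zset_shift (F : int -> int -> R) :
  \sum_(l <- Zset p z) \sum_(m <- Zset p z) A l m * F l m
  = \sum_(l <- Zpset p z) \sum_(m <- Zpset p z) Atilde p z A l m * F (l + 1) (m + 1).
Proof.
set s := [seq i%:Z - z%:Z | i <- iota 0 (2 * p)].
have Zset_shift : Zset p z = [seq x + 1 | x <- s] by rewrite /Zset /s -map_comp.
have Zpset_rcons : Zpset p z = rcons s ((2 * p)%:Z - z%:Z).
  by rewrite /Zpset /s -addn1 iotaD map_cat /= cats1.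
have last_out : ((2 * p)%:Z - z%:Z + 1) \notin Zset p z.
  apply/negP; rewrite /Zset => /mapP [i]; rewrite mem_iota => /andP[_ i_lt] /eqP.
  by rewrite !(inj_eq (addIr _)) eqz_nat => /eqP i_eq; rewrite i_eq ltnn in i_lt.
have s_in x : x \in s -> x + 1 \in Zset p z.
  by move=> xs; rewrite Zset_shift; apply: (map_f (fun y => y + 1)).
rewrite Zpset_rcons big_rcons /= [X in _ + X]big1 ?addr0; last first.
  by move=> m _; rewrite /Atilde (negbTE last_out) /= mul0r.
rewrite Zset_shift big_map big_seq [RHS]big_seq; apply: eq_bigr => l ls.
rewrite big_rcons /= /Atilde (negbTE last_out) andbF mul0r addr0 s_in //=.
by rewrite big_map big_seq [RHS]big_seq; apply: eq_bigr => m ms; rewrite s_in.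
Qed.

End ShiftedMatrix.

Section CombinedFlux.
Variables (R : realType) (N : nat).
Variables (v : 'rV[R]_N -> 'rV[R]_N) (psi : 'rV[R]_N -> R).
Variables (g h : 'rV[R]_N -> 'rV[R]_N -> 'rV[R]_N) (alpha : R).
Hypotheses (h_ec : entropy_conservative v psi h)
  (g_ed : entropy_dissipative v psi g) (alpha01 : 0 <= alpha <= 1).
Implicit Types (a b c : 'rV[R]_N) (l m : int).

Local Notation H := (two_point_entropy_flux v psi h).
Local Notation G := (two_point_entropy_flux v psi g).
Local Notation phi := (phi_fam alpha g h).
Local Notation Phi := (Phi_fam alpha G H).

Let residual c l m a b := dot (v c) (phi l m a b) - Phi l m a b.

Let h_left := entropy_conservative_residual_left h_ec.
Let h_right := entropy_conservative_residual_right h_ec.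

Lemma residual_mix c (k1 k2 : 'rV[R]_N) (K1 K2 : R) :
  dot (v c) (alpha *: k1 + (1 - alpha) *: k2) - (alpha * K1 + (1 - alpha) * K2)
    - psi c
  = alpha * (dot (v c) k1 - K1 - psi c) + (1 - alpha) * (dot (v c) k2 - K2 - psi c).
Proof. by rewrite linearD !linearZ /=; ring. Qed.

Lemma residual_default c l m a b :
  ~~ ((l == 0) && (m == 1)) -> ~~ ((l == 1) && (m == 0)) ->
  residual c l m a b = dot (v c) (h a b) - H a b.
Proof.
by move=> /negbTE l0m1 /negbTE l1m0; rewrite /residual /phi_fam /Phi_fam l0m1 l1m0.
Qed.

Lemma residual_left_1m_le w m a b :
  (m == 0 -> 0 <= w) -> w * (residual a 1 m a b - psi a) <= 0.
Proof.
move=> w_ge0; have [m0 | m_neq0] := eqVneq m 0; last first.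
  by rewrite residual_default ?andbT ?andbF // h_left subrr mulr0.
subst m; rewrite /residual /phi_fam /Phi_fam /= residual_mix h_left subrr mulr0 addr0.
apply: mulr_ge0_le0; first exact: w_ge0.
apply: mulr_ge0_le0; first by case/andP: alpha01.
by rewrite subr_le0 (entropy_dissipative_residual_right g_ed).
Qed.

Lemma residual_right_l1_le w l a b :
  (l == 0 -> 0 <= w) -> w * (residual b l 1 a b - psi b) <= 0.
Proof.
move=> w_ge0; have [l0 | l_neq0] := eqVneq l 0; last first.
  by rewrite residual_default ?andbT ?andbF // h_right subrr mulr0.
subst l; rewrite /residual /phi_fam /Phi_fam /= residual_mix h_right subrr mulr0 addr0.
apply: mulr_ge0_le0; first exact: w_ge0.
apply: mulr_ge0_le0; first by case/andP: alpha01.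
by rewrite subr_le0 (entropy_dissipative_residual_right g_ed).
Qed.

Lemma residual_left_0m_ge w m a b :
  (m == 1 -> 0 <= w) -> 0 <= w * (residual a 0 m a b - psi a).
Proof.
move=> w_ge0; have [m1 | m_neq1] := eqVneq m 1; last first.
  by rewrite residual_default ?andbT ?andbF // h_left subrr mulr0.
subst m; rewrite /residual /phi_fam /Phi_fam /= residual_mix h_left subrr mulr0 addr0.
apply: mulr_ge0; first exact: w_ge0.
apply: mulr_ge0; first by case/andP: alpha01.
by rewrite subr_ge0 (entropy_dissipative_residual_left g_ed).
Qed.

Lemma residual_right_l0_ge w l a b :
  (l == 1 -> 0 <= w) -> 0 <= w * (residual b l 0 a b - psi b).
Proof.
move=> w_ge0; have [l1 | l_neq1] := eqVneq l 1; last first.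
  by rewrite residual_default ?andbT ?andbF // h_right subrr mulr0.
subst l; rewrite /residual /phi_fam /Phi_fam /= residual_mix h_right subrr mulr0 addr0.
apply: mulr_ge0; first exact: w_ge0.
apply: mulr_ge0; first by case/andP: alpha01.
by rewrite subr_ge0 (entropy_dissipative_residual_left g_ed).
Qed.

Lemma combined_flux_entropy_inequality p z (A B : int -> int -> R)
    (u : int -> 'rV[R]_N) (k : int) :
  \sum_(l <- Zpset p z) \sum_(m <- Zpset p z) Atilde p z A l m = 1 ->
  \sum_(l <- Zpset p z) \sum_(m <- Zpset p z) B l m = 1 ->
  (forall l m, l \in Zpset p z -> m \in Zpset p z -> l != 0 -> m != 0 ->
     Atilde p z A l m = B l m) ->
  0 <= A 0 1 -> 0 <= A 1 0 -> 0 <= B 0 1 -> 0 <= B 1 0 ->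
  dot (v (u k)) (flux_minus p z A phi u k - flux_plus p z B phi u k)
    <= eflux_minus p z A Phi u k - eflux_plus p z B Phi u k.
Proof.
move=> A_mass B_mass AB_off0 A01 A10 B01 B10.
suff : dot (v (u k)) (flux_minus p z A phi u k) - eflux_minus p z A Phi u k
    <= dot (v (u k)) (flux_plus p z B phi u k) - eflux_plus p z B Phi u k.
  by rewrite linearB /=; lra.
rewrite /flux_minus /eflux_minus /flux_plus /eflux_plus !dot_double_sum_sub.
rewrite sum_Zset_shift.
apply: (double_sum_le_of_termwise (y := psi (u k))); first by rewrite A_mass B_mass.
have shift j : k - 1 + (j + 1) = k + j by lia.
move=> l m l_in m_in; rewrite !shift.
have [-> | l_neq0] := eqVneq l 0.
  rewrite addr0 add0r; apply: (@le_trans _ _ 0).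
    by apply: residual_left_1m_le => /eqP m1_eq0; apply: Atilde_ge0; rewrite m1_eq0.
  by apply: residual_left_0m_ge => /eqP ->.
have [-> | m_neq0] := eqVneq m 0.
  rewrite addr0 add0r; apply: (@le_trans _ _ 0).
    by apply: residual_right_l1_le => /eqP l1_eq0; apply: Atilde_ge0; rewrite l1_eq0.
  by apply: residual_right_l0_ge => /eqP ->.
rewrite AB_off0 // -/(residual _ (l + 1) (m + 1) _ _) -/(residual _ l m _ _).
by rewrite !residual_default //; lia.
Qed.

End CombinedFlux.

Lemma derive1_comp_dot (R : realType) (N : nat) (U : 'rV[R]_N -> R)
    (w : 'rV[R]_N) (u : R -> 'rV[R]_N) (t : R) :
  differentiable U (u t) -> (forall x, 'd U (u t) x = dot w x) ->
  derivable u t 1 ->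
  derivable (fun s => U (u s)) t 1 /\ 'D_1 (fun s => U (u s)) t = dot w ('D_1 u t).
Proof.
move=> dU dUE /derivable1_diffP du.
have dUu : differentiable (U \o u) t by apply: differentiable_comp.
split; first exact/derivable1_diffP.
by rewrite deriveE // diff_comp //= dUE -deriveE.
Qed.

Theorem mainTheorem4 (R : realType) (N : nat)
  (f : 'rV[R]_N -> 'rV[R]_N) (U F : 'rV[R]_N -> R) (v : 'rV[R]_N -> 'rV[R]_N)
  (hUconv : strictly_convex U)
  (hv : forall u, differentiable U u /\ forall w, 'd U u w = dot (v u) w)
  (hF : forall u, differentiable f u /\ differentiable F u /\
          forall w, 'd F u w = dot (v u) ('d f u w))
  (p z : nat) (hp : (1 <= p)%N) (hz1 : (1 <= z)%N) (hz2 : (z <= 2 * p - 1)%N)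
  (h : 'rV[R]_N -> 'rV[R]_N -> 'rV[R]_N)
  (h_ec : entropy_conservative v (potential v f F) h)
  (h_sym : symmetric_flux h) (h_cons : consistent_flux f h)
  (A B : int -> int -> R)
  (hA1 : \sum_(l <- Zpset p z) \sum_(m <- Zpset p z) Atilde p z A l m = 1)
  (hB1 : \sum_(l <- Zpset p z) \sum_(m <- Zpset p z) B l m = 1)
  (hAB : forall l m, l \in Zpset p z -> m \in Zpset p z -> l != 0 -> m != 0 ->
           Atilde p z A l m = B l m)
  (hAdiag : forall l, l \in Zset p z -> A l l = 0)
  (hv0 : vcoef p z A B 0 = 0)
  (g : 'rV[R]_N -> 'rV[R]_N -> 'rV[R]_N)
  (g_ed : entropy_dissipative v (potential v f F) g)
  (alpha : R) (halpha : 0 <= alpha <= 1)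
  (hA01 : 0 <= A 0 1) (hA10 : 0 <= A 1 0) (hB01 : 0 <= B 0 1) (hB10 : 0 <= B 1 0) :
  let H := two_point_entropy_flux v (potential v f F) h in
  let G := two_point_entropy_flux v (potential v f F) g in
  let phi := phi_fam alpha g h in
  let Phi := Phi_fam alpha G H in
  (forall (u : int -> 'rV[R]_N) (k : int),
     dot (v (u k)) (flux_minus p z A phi u k - flux_plus p z B phi u k)
       <= eflux_minus p z A Phi u k - eflux_plus p z B Phi u k)
  /\
  (forall (dx : R) (uu : int -> R -> 'rV[R]_N), 0 < dx ->
     (forall k t, derivable (uu k) t 1 /\
        'D_1 (uu k) t = dx^-1 *: (flux_minus p z A phi (fun j => uu j t) k
                                  - flux_plus p z B phi (fun j => uu j t) k)) ->
     forall k t, derivable (fun s => U (uu k s)) t 1 /\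
       'D_1 (fun s => U (uu k s)) t
         <= dx^-1 * (eflux_minus p z A Phi (fun j => uu j t) k
                     - eflux_plus p z B Phi (fun j => uu j t) k)).
Proof.
(* Regularity, convexity, symmetry, consistency and the conditions on the
   index range, the diagonal of [A] and [v_0] are not needed here. *)
move=> H G phi Phi.
have flux_ineq u k := combined_flux_entropy_inequality h_ec g_ed halpha u k
  hA1 hB1 hAB hA01 hA10 hB01 hB10.
split=> // dx uu dx_gt0 semi_discrete k t.
have [uu_der uu_D] := semi_discrete k t.
have [dU dUE] := hv (uu k t).
have [Uu_der ->] := derive1_comp_dot dU dUE uu_der.
split=> //; rewrite uu_D linearZ /=.
apply: ler_wpM2l; first by rewrite invr_ge0 ltW.
exact: flux_ineq.
Qed.
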